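(* Consider problem (P): $\min_{{\bf x}\in\mathbb{R}^n} f({\bf x})+\lambda\|(A{\bf x}+{\bf b})_+\|_0$. For ${\bf x}^*\in\mathbb{R}^n$ let $\Gamma_*:=\{i: A_i{\bf x}^*+b_i=0\}$. (i) If ${\bf x}^*$ is a local minimizer of (P) and $A_{\Gamma_*}$ has full row rank, then $$-\nabla f({\bf x}^* )\in A^\top\,\partial\|(A{\bf x}^*+{\bf b})_+\|_0 .\qquad (\ast)$$ (ii) If ${\bf x}^*$ satisfies $(\ast)$ and $f$ is convex on some neighbourhood of ${\bf x}^*$, then ${\bf x}^*$ is a local minimizer of (P).
   Context: Standing setting: $f:\mathbb{R}^n\to\mathbb{R}$ is twice continuously differentiable, $\lambda>0$, $A\in\mathbb{R}^{m\times n}$ with rows $A_1,\dots,A_m$, ${\bf b}\in\mathbb{R}^m$. For ${\bf z}\in\mathbb{R}^m$, ${\bf z}_+$ is the componentwise positive part $\max\{z_i,0\}$ and $\|{\bf z}\|_0$ the number of nonzero entries. For $\Gamma\subseteq\{1,\dots,m\}$, $A_\Gamma$ is the submatrix of rows indexed by $\Gamma$. $\partial\|{\bf y}_+\|_0$ is the limiting subdifferential of ${\bf y}\mapsto\|{\bf y}_+\|_0$ at ${\bf y}$, which equals $\{{\bf v}\in\mathbb{R}^m: v_i\ge 0 \text{ if } y_i=0,\ v_i=0 \text{ if } y_i\neq0\}$. *)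

From HB Require Import structures.
From mathcomp Require Import all_boot all_order all_algebra.
From mathcomp Require Import all_classical all_reals all_analysis.
Set Implicit Arguments. Unset Strict Implicit. Unset Printing Implicit Defensive.
Import Order.TTheory GRing.Theory Num.Theory.
Import numFieldNormedType.Exports.
Local Open Scope classical_set_scope.
Local Open Scope ring_scope.

Definition partial {R : realType} {n : nat} (i : 'I_n) (g : 'cV[R]_n -> R)
  : 'cV[R]_n -> R := fun x => 'D_(delta_mx i 0) g x.

Definition grad {R : realType} {n : nat} (g : 'cV[R]_n -> R) (x : 'cV[R]_n)
  : 'cV[R]_n := \col_i partial i g x.

Definition C2 {R : realType} {n : nat} (f : 'cV[R]_n -> R) : Prop :=
  (forall x, differentiable f x) /\
  (forall (i : 'I_n) x, differentiable (partial i f) x) /\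
  (forall i j : 'I_n, continuous (partial j (partial i f))).

(* || z_+ ||_0 = number of strictly positive entries of z *)
Definition l0pos {R : realType} {m : nat} (z : 'cV[R]_m) : nat :=
  #|[set i : 'I_m | 0 < z i 0]|.

Definition objP {R : realType} {m n : nat} (f : 'cV[R]_n -> R) (lam : R)
  (A : 'M[R]_(m, n)) (b : 'cV[R]_m) (x : 'cV[R]_n) : R :=
  f x + lam * (l0pos (A *m x + b))%:R.

Definition local_minimizer {R : realType} {n : nat} (F : 'cV[R]_n -> R)
  (x : 'cV[R]_n) : Prop :=
  exists2 eps : R, 0 < eps & forall y, ball x eps y -> F x <= F y.

(* limiting subdifferential of y |-> ||y_+||_0 at y (explicit form given in
   the paper) *)
Definition subdiff_l0pos {R : realType} {m : nat} (y : 'cV[R]_m)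
  : set 'cV[R]_m :=
  [set v | forall i : 'I_m, (y i 0 = 0 -> 0 <= v i 0) /\ (y i 0 <> 0 -> v i 0 = 0)].

Definition active_set {R : realType} {m n : nat} (A : 'M[R]_(m, n))
  (b : 'cV[R]_m) (x : 'cV[R]_n) : {set 'I_m} :=
  [set i | (A *m x + b) i 0 == 0].

(* submatrix A_Gamma of rows indexed by Gamma (in increasing order) *)
Definition rows_of {R : realType} {m n : nat} (G : {set 'I_m})
  (A : 'M[R]_(m, n)) : 'M[R]_(#|G|, n) :=
  rowsub (fun k : 'I_#|G| => @enum_val _ (mem G) k) A.

Definition full_row_rank {R : realType} {p n : nat} (B : 'M[R]_(p, n)) : Prop :=
  \rank B = p.

Definition stationary {R : realType} {m n : nat} (f : 'cV[R]_n -> R)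
  (A : 'M[R]_(m, n)) (b : 'cV[R]_m) (x : 'cV[R]_n) : Prop :=
  exists2 v, subdiff_l0pos (A *m x + b) v & - grad f x = A^T *m v.

Definition convex_near {R : realType} {n : nat} (f : 'cV[R]_n -> R)
  (x : 'cV[R]_n) : Prop :=
  exists2 d : R, 0 < d & forall y z (t : R), ball x d y -> ball x d z ->
    0 <= t <= 1 -> f (t *: y + (1 - t) *: z) <= t * f y + (1 - t) * f z.

From HB Require Import structures.
From mathcomp Require Import all_boot all_order all_algebra.
From mathcomp Require Import all_classical all_reals all_analysis.
From mathcomp Require Import lra.
Import Order.TTheory GRing.Theory Num.Theory.
Import numFieldNormedType.Exports.
Local Open Scope classical_set_scope.
Local Open Scope ring_scope.

(* Write z(y) := A y + b and call d a feasible direction at x when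
   A_i d <= 0 for every active index i (z(x)_i = 0).  Everything rests on how
   the positive support of z behaves near x:
   - near x, strict signs of the entries of z(x) persist; hence along a
     feasible direction the positive support of z(x + h d) is contained in
     that of z(x) for small h > 0, while for every y near x it contains that
     of z(x), and if it is not larger then y - x is a feasible direction.
   (i) At a local minimizer the l0 term cannot grow along feasible
   directions, so <grad f(x), d> = f'(x; d) >= 0 for all feasible d.  If the
   active rows A_Gamma have full row rank, a Farkas-type lemma gives w >= 0
   with -grad f(x) = A_Gamma^T w; extending w by zero yields (star).
   (ii) Conversely (star) gives <grad f(x), d> >= 0 for feasible d.  For y
   near x, either the l0 term jumps by at least lam, which continuity of f
   absorbs, or y - x is feasible and the gradient inequality of the locally
   convex f gives f(x) <= f(y). *)

Section DirectionalDerivatives.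
Context {R : realType} {V : normedModType R}.

Lemma derive_ge_of_quotients (g : V -> R) (x v : V) (c : R) :
  derivable g x v ->
  (\forall h \near 0^'+, c <= h^-1 *: (g (h *: v + x) - g x)) ->
  c <= 'D_v g x.
Proof. by move=> dg; apply: cvgr_to_ge; apply: cvg_dnbhs_at_right; exact: dg. Qed.

Lemma derive_le_of_quotients (g : V -> R) (x v : V) (c : R) :
  derivable g x v ->
  (\forall h \near 0^'+, h^-1 *: (g (h *: v + x) - g x) <= c) ->
  'D_v g x <= c.
Proof. by move=> dg; apply: cvgr_to_le; apply: cvg_dnbhs_at_right; exact: dg. Qed.

Lemma near_ray {x : V} (d : V) {P : V -> Prop} :
  (\forall y \near x, P y) -> \forall h \near (0 : R)^'+, P (h *: d + x).
Proof.
have ray : (fun h : R => h *: d + x) @ (0 : R) --> x.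
  rewrite -[x in _ --> x]add0r -(scale0r d).
  by apply: cvgD; [apply: cvgZr_tmp; exact: cvg_id | exact: cvg_cst].
by move=> Px; exact: (cvg_at_right_filter ray).
Qed.

Lemma segment_convex_derive_le (g : V -> R) (x y : V) :
  derivable g x (y - x) ->
  (forall t, 0 < t <= 1 -> g (t *: y + (1 - t) *: x) <= t * g y + (1 - t) * g x) ->
  'D_(y - x) g x <= g y - g x.
Proof.
move=> dg conv; apply: derive_le_of_quotients => //; near=> h.
have h_pos : 0 < h by near: h; exact: nbhs_right_gt.
have h_le1 : h <= 1 by near: h; apply: nbhs_right_le; exact: ltr01.
have := conv h; rewrite h_pos h_le1 => /(_ isT).
have -> : h *: y + (1 - h) *: x = h *: (y - x) + x.
  by rewrite scalerBr scalerBl scale1r addrA addrAC.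
by rewrite ler_pdivrMl //; lra.
Unshelve. all: by end_near.
Qed.

End DirectionalDerivatives.

Lemma derive_grad (R : realType) n (g : 'cV[R]_n -> R) (x v : 'cV[R]_n) :
  differentiable g x -> 'D_v g x = ((grad g x)^T *m v) 0 0.
Proof.
move=> dg; rewrite deriveE // [in LHS](matrix_sum_delta v) linear_sum /= !mxE.
apply: eq_bigr => i _; rewrite big_ord1 linearZ /= !mxE mulrC.
by rewrite /partial deriveE.
Qed.

Lemma full_row_rank_farkas {R : realFieldType} {k n : nat} {B : 'M[R]_(k, n)}
    {g : 'cV[R]_n} :
  \rank B = k ->
  (forall d : 'cV[R]_n, (forall r, (B *m d) r 0 <= 0) -> 0 <= (g^T *m d) 0 0) ->
  exists2 w : 'cV[R]_k, (forall r, 0 <= w r 0) & - g = B^T *m w.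
Proof.
move=> rkB gB.
(* Testing with d and -d shows that g is orthogonal to the kernel of B, *)
have ker_orth (d : 'cV[R]_n) : B *m d = 0 -> g^T *m d = 0.
  move=> Bd; apply/matrixP => i j; rewrite !ord1 [RHS]mxE; apply/eqP.
  have nonneg := gB d; have := gB (- d).
  rewrite !mulmxN Bd oppr0 mxE oppr_ge0 eq_le => -> //; last by move=> r; rewrite mxE.
  by rewrite andTb; apply: nonneg => r; rewrite Bd mxE.
(* so g^T = u B lies in the row space of B. *)
have /submxP[u gu] : (g^T <= B)%MS.
  rewrite submxE; apply/eqP/matrixP => i j.
  have Bc : B *m (cokermx B *m (delta_mx j 0 : 'cV[R]_n)) = 0.
    by rewrite mulmxA mulmx_coker mul0mx.
  by move: (ker_orth _ Bc); rewrite mulmxA -colE => /matrixP/(_ i 0); rewrite !mxE.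
(* Full row rank gives a right inverse E^T of B, *)
have /row_fullP[E EB] : row_full B^T by rewrite /row_full mxrank_tr rkB.
have BE : B *m E^T = 1%:M by rewrite -[B]trmxK -trmx_mul EB trmx1.
exists (- u^T); last by rewrite mulmxN -trmx_mul -gu trmxK.
(* and d = - E^T e_r satisfies B d = - e_r <= 0, so the r-th entry of -u is
   nonnegative. *)
move=> r; pose d : 'cV[R]_n := - (E^T *m delta_mx r 0).
have Bd : B *m d = - delta_mx r 0 by rewrite mulmxN mulmxA BE mul1mx.
have gd : g^T *m d = - (u *m delta_mx r 0).
  by rewrite gu mulmxN -mulmxA (mulmxA B) BE mul1mx.
have := gB d; rewrite Bd gd -colE !mxE oppr_ge0; apply => q.
by rewrite !mxE oppr_le0 ler0n.
Qed.

Lemma l0pos_le (R : realType) m (z1 z2 : 'cV[R]_m) :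
  (forall i, 0 < z1 i 0 -> 0 < z2 i 0) -> (l0pos z1 <= l0pos z2)%N.
Proof.
by move=> sub; apply/subset_leq_card/fintype.subsetP => i; rewrite !inE; exact: sub.
Qed.

Lemma l0pos_lt (R : realType) m (z1 z2 : 'cV[R]_m) (i : 'I_m) :
  (forall j, 0 < z1 j 0 -> 0 < z2 j 0) -> ~~ (0 < z1 i 0) -> 0 < z2 i 0 ->
  (l0pos z1 < l0pos z2)%N.
Proof.
move=> sub z1i z2i; apply/proper_card/properP; split.
  by apply/fintype.subsetP => j; rewrite !inE; exact: sub.
by exists i; [rewrite in_setE | apply/negP; rewrite in_setE; exact/negP].
Qed.

Section AffineSupport.
Context {R : realType} {m n : nat} (A : 'M[R]_(m, n)) (b : 'cV[R]_m).
Local Notation z y := (A *m y + b).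

Definition feasible_dir (x d : 'cV[R]_n) : Prop :=
  forall i, (z x) i 0 = 0 -> (A *m d) i 0 <= 0.

Lemma affine_entry_continuous (i : 'I_m) :
  continuous (fun y : 'cV[R]_n => (z y) i 0).
Proof.
have -> : (fun y : 'cV[R]_n => (z y) i 0) =
    (\sum_j (fun y : 'cV[R]_n => A i j * y j 0)) + cst (b i 0).
  by apply: funext => y; rewrite !mxE /= fct_sumE.
move=> y; apply: continuousD; last exact: cst_continuous.
elim/big_rec: _ => [|j s _ IH]; first exact: cst_continuous.
apply: continuousD => //; apply: continuousM; first exact: cst_continuous.
exact: coord_continuous.
Qed.

Lemma strict_sign_persistence (x : 'cV[R]_n) :
  \forall y \near x, forall i,
    (0 < (z x) i 0 -> 0 < (z y) i 0) /\ ((z x) i 0 < 0 -> (z y) i 0 < 0).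
Proof.
apply: (@filter_forall _ _ (fun i (y : 'cV[R]_n) =>
  (0 < (z x) i 0 -> 0 < (z y) i 0) /\ ((z x) i 0 < 0 -> (z y) i 0 < 0))
  (nbhs x) _) => i.
have zc := affine_entry_continuous i x.
have [neg|pos|zero] := ltgtP ((z x) i 0) 0.
- by near=> y; split=> // _; near: y; exact: (cvgr_lt _ zc).
- by near=> y; split=> // _; near: y; exact: (cvgr_gt _ zc).
- by near=> y.
Unshelve. all: by end_near.
Qed.

Lemma support_shrinks_along_feasible (x d : 'cV[R]_n) :
  feasible_dir x d ->
  \forall h \near 0^'+, forall i, 0 < (z (h *: d + x)) i 0 -> 0 < (z x) i 0.
Proof.
move=> fd; near=> h.
have h_pos : 0 < h by near: h; exact: nbhs_right_gt.
have persist : forall i, (0 < (z x) i 0 -> 0 < (z (h *: d + x)) i 0) /\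
    ((z x) i 0 < 0 -> (z (h *: d + x)) i 0 < 0).
  by near: h; exact: (near_ray d (strict_sign_persistence x)).
move=> i zi; have [neg|//|zero] := ltgtP ((z x) i 0) 0.
  by have [_ /(_ neg) /(lt_trans zi)] := persist i; rewrite ltxx.
have zE : (z (h *: d + x)) i 0 = h * (A *m d) i 0 + (z x) i 0.
  by rewrite mulmxDr -scalemxAr !mxE addrA.
by move: zi; rewrite zE zero addr0 pmulr_rgt0 // ltNge fd.
Unshelve. all: by end_near.
Qed.

Lemma feasible_of_support_sub (x y : 'cV[R]_n) :
  (forall i, 0 < (z y) i 0 -> 0 < (z x) i 0) -> feasible_dir x (y - x).
Proof.
move=> sub i zero.
have -> : (A *m (y - x)) i 0 = (z y) i 0 - (z x) i 0 by rewrite mulmxBr !mxE; lra.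
by rewrite zero subr0 leNgt; apply/negP => /sub; rewrite zero ltxx.
Qed.

Definition scatter (G : {set 'I_m}) : 'M[R]_(m, #|G|) :=
  \matrix_(i, r) (i == enum_val r)%:R.

Lemma rows_of_scatter (G : {set 'I_m}) : rows_of G A = (scatter G)^T *m A.
Proof.
apply/matrixP => r j; rewrite !mxE (bigD1 (enum_val r)) //= big1 ?addr0.
  by rewrite !mxE eqxx mul1r.
by move=> i /negbTE ir; rewrite !mxE ir mul0r.
Qed.

Lemma rows_of_mulmx (G : {set 'I_m}) (d : 'cV[R]_n) (r : 'I_#|G|) :
  (rows_of G A *m d) r 0 = (A *m d) (enum_val r) 0.
Proof. by rewrite !mxE; apply: eq_bigr => j _; rewrite mxE. Qed.

Lemma active_multipliers {x g : 'cV[R]_n} :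
  full_row_rank (rows_of (active_set A b x) A) ->
  (forall d, feasible_dir x d -> 0 <= (g^T *m d) 0 0) ->
  exists2 v, subdiff_l0pos (z x) v & - g = A^T *m v.
Proof.
set G := active_set A b x => rk g_nonneg.
have [w w_ge0 gw] : exists2 w : 'cV[R]_#|G|,
    (forall r, 0 <= w r 0) & - g = (rows_of G A)^T *m w.
  apply: (full_row_rank_farkas rk) => d Ad; apply: g_nonneg => i zero.
  have iG : i \in G by rewrite inE zero.
  by rewrite -(enum_rankK_in iG iG) -rows_of_mulmx.
exists (scatter G *m w); last by rewrite gw rows_of_scatter trmx_mul trmxK mulmxA.
move=> i; split => [_|nz].
  by rewrite mxE sumr_ge0 // => r _; rewrite mxE mulr_ge0.
rewrite mxE big1 // => r _; rewrite mxE; case: eqP => [ir|]; last by rewrite mul0r.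
by move: (enum_valP r); rewrite -ir inE => /eqP.
Qed.

Lemma multipliers_feasible_nonneg {x g d : 'cV[R]_n} :
  (exists2 v, subdiff_l0pos (z x) v & - g = A^T *m v) ->
  feasible_dir x d -> 0 <= (g^T *m d) 0 0.
Proof.
move=> [v sv gv] fd.
have -> : g = - (A^T *m v) by rewrite -gv opprK.
rewrite linearN /= mulNmx trmx_mul trmxK -mulmxA mxE oppr_ge0 mxE.
apply: sumr_le0 => i _; rewrite mxE.
have [zero|nz] := eqVneq ((z x) i 0) 0.
  by have [v_ge0 _] := sv i; rewrite mulr_ge0_le0 ?v_ge0 ?fd.
by have [_ ->] := sv i; [rewrite mul0r | exact/eqP].
Qed.

Lemma local_min_feasible_nonneg {f : 'cV[R]_n -> R} {lam : R} {x d : 'cV[R]_n} :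
  0 <= lam -> differentiable f x -> local_minimizer (objP f lam A b) x ->
  feasible_dir x d -> 0 <= 'D_d f x.
Proof.
move=> lam_ge0 dfx [eps eps_pos xmin] fd.
apply: derive_ge_of_quotients; first exact: diff_derivable.
near=> h.
have h_pos : 0 < h by near: h; exact: nbhs_right_gt.
have y_ball : ball x eps (h *: d + x).
  by near: h; exact: (near_ray d (nbhsx_ballx x _ eps_pos)).
have sub : forall i, 0 < (z (h *: d + x)) i 0 -> 0 < (z x) i 0.
  by near: h; exact: support_shrinks_along_feasible.
have l0_le : lam * (l0pos (z (h *: d + x)))%:R <= lam * (l0pos (z x))%:R.
  by apply: ler_wpM2l => //; rewrite ler_nat; exact: l0pos_le.
have := xmin _ y_ball; rewrite /objP => obj_le.
by apply: mulr_ge0; [rewrite invr_ge0 ltW | rewrite subr_ge0; lra].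
Unshelve. all: by end_near.
Qed.

Lemma local_min_of_stationary (f : 'cV[R]_n -> R) (lam : R) (x : 'cV[R]_n) :
  0 < lam -> differentiable f x -> stationary f A b x -> convex_near f x ->
  local_minimizer (objP f lam A b) x.
Proof.
move=> lam_pos dfx st [dl dl_pos conv].
suff : \forall y \near x, objP f lam A b x <= objP f lam A b y.
  by case/nbhs_ballP => e e_pos near_min; exists e => // y /near_min.
near=> y.
have sub : forall i, 0 < (z x) i 0 -> 0 < (z y) i 0.
  by near: y; apply: filterS (strict_sign_persistence x) => y' + i => /(_ i) [].
have y_ball : ball x dl y by near: y; exact: nbhsx_ballx.
have f_close : f x - lam < f y.
  near: y; apply: (cvgr_gt _ (differentiable_continuous dfx)).
  by rewrite ltrBlDl ltrDr.
have l0_le : lam * (l0pos (z x))%:R <= lam * (l0pos (z y))%:R.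
  by rewrite ler_pM2l // ler_nat; exact: l0pos_le.
rewrite /objP.
have [/existsP[i /andP[zyi zxi]]|] :=
  boolP [exists i, (0 < (z y) i 0) && ~~ (0 < (z x) i 0)].
  (* the l0 term jumps by at least lam, which f(x) - f(y) < lam absorbs *)
  have : (l0pos (z x)).+1%:R <= (l0pos (z y))%:R :> R.
    by rewrite ler_nat; exact: l0pos_lt zxi zyi.
  rewrite -natr1 -(ler_pM2l lam_pos); lra.
(* otherwise y - x is feasible and the gradient inequality applies *)
rewrite negb_exists => /forallP no_new.
have fd : feasible_dir x (y - x).
  by apply: feasible_of_support_sub => i zyi; move: (no_new i); rewrite zyi /= negbK.
have := multipliers_feasible_nonneg st fd; rewrite -derive_grad // => D_ge0.
have D_le : 'D_(y - x) f x <= f y - f x.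
  apply: segment_convex_derive_le; first exact: diff_derivable.
  move=> t /andP[t_pos t_le1]; apply: conv => //; first exact: ballxx.
  by rewrite ltW.
lra.
Unshelve. all: by end_near.
Qed.

End AffineSupport.

Theorem lemma3p1 (R : realType) (m n : nat) (f : 'cV[R]_n -> R) (lam : R)
  (A : 'M[R]_(m, n)) (b : 'cV[R]_m) :
  C2 f -> 0 < lam ->
  (forall xs : 'cV[R]_n,
     local_minimizer (objP f lam A b) xs ->
     full_row_rank (rows_of (active_set A b xs) A) ->
     stationary f A b xs) /\
  (forall xs : 'cV[R]_n,
     stationary f A b xs -> convex_near f xs ->
     local_minimizer (objP f lam A b) xs).
Proof.
move=> [f_diff _] lam_pos; split=> xs.
- move=> xs_min rk; apply: (active_multipliers A b rk) => d fd.
  rewrite -derive_grad //.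
  exact: (local_min_feasible_nonneg A b (ltW lam_pos) (f_diff xs) xs_min fd).
- by move=> st cvx; exact: local_min_of_stationary.
Qed.
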